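(* Let $X$ be a subshift of finite type, $Y$ a sofic shift, and $\pi : X \to Y$ a factor code which is right-closing and regular. Then there is a sliding block code $\rho : X \to X_{\mathbb K(Y)}$ such that $L_{\mathbb K(Y)}\circ\rho=\pi$.
   Context: A sliding block code $\pi:X\to Y$ is right-closing if whenever $x,x'\in X$ satisfy $\pi(x)=\pi(x')$ and $x_i=x'_i$ for all $i\le N$ for some $N\in\mathbb Z$, then $x=x'$. For $x\in X$ let $\mathbb U(x)=\{z\in X:\exists N\ \forall i\le N,\ z_i=x_i\}$; $x$ is regular for $\pi$ if $\pi$ maps $\mathbb U(x)$ onto $\mathbb U(\pi(x))$; $\mathcal R(\pi)$ is the set of such points, and $\pi$ is regular if $\mathcal R(\pi)$ is dense in $X$. For a sofic shift $Y\subseteq A^{\mathbb Z}$ and $y\in Y$, $F(y)=\{w\in Y[0,\infty): y_{(-\infty,-1]}w\in Y\}$, where $Y[0,\infty)=\{y_{[0,\infty)}:y\in Y\}$. The future cover $(\mathbb K(Y),L_{\mathbb K(Y)})$ is the labeled graph with vertices the distinct sets $F(y)$, $y\in Y$, and an edge labeled $a\in A$ from $F(y)$ to $F(z)$ exactly when $F(z)=\{w\in A^{\mathbb N}: aw\in F(y)\}$ (one edge per such pair and label); $X_{\mathbb K(Y)}$ is its edge shift and $L_{\mathbb K(Y)}:X_{\mathbb K(Y)}\to Y$ reads labels coordinatewise. *)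

From mathcomp Require Import all_boot.
From Stdlib Require Import ZArith.

Set Implicit Arguments.
Unset Strict Implicit.
Unset Printing Implicit Defensive.

Definition config (A : Type) := Z -> A.
Definition shiftset (A : Type) := config A -> Prop.

Definition block (A : Type) (x : config A) (i : Z) (n : nat) : seq A :=
  map (fun k => x (i + Z.of_nat k)%Z) (iota 0 n).

Definition is_SFT (A : finType) (X : shiftset A) : Prop :=
  exists (n : nat) (W : seq A -> Prop),
    forall x : config A, X x <-> (forall i : Z, W (block x i n)).

Definition is_sofic (B : finType) (Y : shiftset B) : Prop :=
  exists (V E : finType) (src tgt : E -> V) (lab : E -> B),
    forall y : config B,
      Y y <-> exists xi : config E,
                (forall i : Z, tgt (xi i) = src (xi (i + 1)%Z)) /\
                (forall i : Z, y i = lab (xi i)).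

Definition sliding_block_code (A B : Type) (X : shiftset A) (Y : shiftset B)
    (f : config A -> config B) : Prop :=
  (forall x, X x -> Y (f x)) /\
  exists (m a : nat) (Phi : seq A -> B),
    forall x, X x -> forall i : Z, f x i = Phi (block x (i - Z.of_nat m)%Z (m + a + 1)).

Definition factor_code (A B : Type) (X : shiftset A) (Y : shiftset B)
    (f : config A -> config B) : Prop :=
  sliding_block_code X Y f /\ forall y, Y y -> exists x, X x /\ f x = y.

Definition right_closing (A B : Type) (X : shiftset A) (f : config A -> config B) : Prop :=
  forall x x', X x -> X x' -> f x = f x' ->
    (exists N : Z, forall i : Z, (i <= N)%Z -> x i = x' i) -> x = x'.

Definition Uset (A : Type) (X : shiftset A) (x : config A) : shiftset A :=
  fun z => X z /\ exists N : Z, forall i : Z, (i <= N)%Z -> z i = x i.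

Definition regular_point (A B : Type) (X : shiftset A) (Y : shiftset B)
    (f : config A -> config B) (x : config A) : Prop :=
  forall y, Uset Y (f x) y <-> exists z, Uset X x z /\ f z = y.

(* f is regular: its regular points are dense in X (product topology) *)
Definition regular_code (A B : Type) (X : shiftset A) (Y : shiftset B)
    (f : config A -> config B) : Prop :=
  forall x, X x -> forall n : nat, exists r,
    X r /\ regular_point X Y f r /\
    forall i : Z, (- Z.of_nat n <= i <= Z.of_nat n)%Z -> r i = x i.

Definition rseq (B : Type) := nat -> B.
Definition fset (B : Type) := rseq B -> Prop.

Definition right_half (B : Type) (Y : shiftset B) : fset B :=
  fun w => exists y, Y y /\ forall n : nat, w n = y (Z.of_nat n).

Definition glue (B : Type) (y : config B) (w : rseq B) : config B :=
  fun i => if (i <? 0)%Z then y i else w (Z.to_nat i).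

Definition future (B : Type) (Y : shiftset B) (y : config B) : fset B :=
  fun w => right_half Y w /\ Y (glue y w).

Definition is_future (B : Type) (Y : shiftset B) (F : fset B) : Prop :=
  exists y, Y y /\ F = future Y y.

(* edges of K(Y): (source vertex, label, target vertex); there is at most
   one edge per (source, label, target) triple *)
Definition Kedge (B : Type) := (fset B * B * fset B)%type.

Definition Kedge_src (B : Type) (e : Kedge B) : fset B := e.1.1.
Definition Kedge_lab (B : Type) (e : Kedge B) : B := e.1.2.
Definition Kedge_tgt (B : Type) (e : Kedge B) : fset B := e.2.

Definition is_Kedge (B : Type) (Y : shiftset B) (e : Kedge B) : Prop :=
  is_future Y (Kedge_src e) /\ is_future Y (Kedge_tgt e) /\
  Kedge_tgt e = (fun w => Kedge_src e (fun n => match n with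
                                                 | 0 => Kedge_lab e
                                                 | S k => w k end)).

Definition XK (B : Type) (Y : shiftset B) : shiftset (Kedge B) :=
  fun xi => forall i : Z, is_Kedge Y (xi i) /\
                          Kedge_tgt (xi i) = Kedge_src (xi (i + 1)%Z).

Definition LK (B : Type) (xi : config (Kedge B)) : config B :=
  fun i => Kedge_lab (xi i).

From Stdlib Require Import ZArith Lia.
From Stdlib Require Import Classical ClassicalEpsilon FunctionalExtensionality PropExtensionality.
From mathcomp Require Import all_boot zify.

(* A right-closing code has a delay D: the left past of a point together with
   a window of its image determines the next symbol (by compactness).  At a
   regular point r every future w of pi r is realised by some z left
   asymptotic to r with pi z = (pi r)_(-oo,-1] w; the delay forces z = r far
   to the left, and since X is of finite type z can be grafted onto any x
   agreeing with r on a large central window.  So F(pi r) depends only on a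
   central window of r, and since regular points are dense,
   rho(x)_i := (F(pi r), (pi r)_0, F(pi (sigma r))), for any regular r
   reproducing the window of x at i, is a sliding block code into X_K(Y)
   lifting pi. *)

Set Implicit Arguments.
Unset Strict Implicit.
Unset Printing Implicit Defensive.

Definition shift (T : Type) (k : Z) (x : config T) : config T := fun i => x (i + k)%Z.

Definition agree (T : Type) (x y : config T) (lo hi : Z) : Prop :=
  forall i, (lo <= i <= hi)%Z -> x i = y i.

Definition splice (T : Type) (p : Z) (x z : config T) : config T :=
  fun i => if (i <=? p)%Z then x i else z i.

Section ShiftBlock.
Variable T : Type.
Implicit Types (x y : config T).

Lemma shiftK k x : shift (- k) (shift k x) = x.
Proof. by apply: functional_extensionality => i; rewrite /shift; f_equal; lia. Qed.

Lemma shiftNK k x : shift k (shift (- k) x) = x.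
Proof. by rewrite -{1}(Z.opp_involutive k) shiftK. Qed.

Lemma block_shift k x i n : block (shift k x) i n = block x (i + k) n.
Proof. by apply/eq_map => j; rewrite /shift; f_equal; lia. Qed.

Lemma eq_block x y i n :
  agree x y i (i + Z.of_nat n - 1) -> block x i n = block y i n.
Proof.
move=> xy; apply/eq_in_map => j; rewrite mem_iota add0n => /andP[_ jn].
apply: xy; lia.
Qed.

Lemma agree_block x y i n :
  block x i n = block y i n -> agree x y i (i + Z.of_nat n - 1).
Proof.
move=> xy j hj; have jn : (Z.to_nat (j - i)%Z < n)%N by lia.
have := congr1 (fun s => nth (x i) s (Z.to_nat (j - i))) xy.
rewrite /block !(nth_map 0%N) ?size_iota // nth_iota // add0n.
by have -> : (i + Z.of_nat (Z.to_nat (j - i)))%Z = j by lia.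
Qed.

End ShiftBlock.

Section ShiftsOfFiniteType.
Variables (A : finType) (X : shiftset A).
Hypothesis sftX : is_SFT X.

Lemma SFT_shift k x : X x -> X (shift k x).
Proof.
case: sftX => n [W defX] /defX Xx; apply/defX => i.
by rewrite block_shift.
Qed.

Lemma SFT_closed x :
  (forall N : nat, exists2 y, X y & agree x y (- Z.of_nat N) (Z.of_nat N)) -> X x.
Proof.
case: sftX => n [W defX] approx; apply/defX => i.
have [y /defX Xy xy] := approx (Z.abs_nat i + n)%N.
rewrite (@eq_block _ x y) // => j hj; apply: xy; lia.
Qed.

Lemma SFT_splice : exists n : nat, forall p x z, X x -> X z ->
  agree x z (p - Z.of_nat n) p -> X (splice p x z).
Proof.
case: sftX => n [W defX]; exists n => p x z /defX Xx /defX Xz xz; apply/defX => i.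
have [ileft | iright] := Z.le_gt_cases (i + Z.of_nat n) (p + 1).
- rewrite (@eq_block _ _ x) // => j hj.
  by rewrite /splice (proj2 (Z.leb_le j p)) //; lia.
- rewrite (@eq_block _ _ z) // => j hj; rewrite /splice.
  case: (Z.leb_spec j p) => // jp; apply: xz; lia.
Qed.

End ShiftsOfFiniteType.

Lemma sofic_shift (B : finType) (Y : shiftset B) :
  is_sofic Y -> forall k y, Y y -> Y (shift k y).
Proof.
case=> V [E [src [tgt [lab defY]]]] k y /defY [xi [path_xi lab_xi]].
apply/defY; exists (shift k xi); split=> i; rewrite /shift //.
by rewrite path_xi; do 2 f_equal; lia.
Qed.

Lemma Uset_shift (T : Type) (S : shiftset T) :
  (forall k z, S z -> S (shift k z)) ->
  forall k x z, Uset S (shift k x) z <-> Uset S x (shift (- k) z).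
Proof.
move=> shiftS k x z; split=> -[Sz [N zx]]; split.
- exact: shiftS.
- exists (N + k)%Z => i iN; rewrite /shift zx; last lia.
  by rewrite /shift; f_equal; lia.
- by rewrite -(shiftNK k z); apply: shiftS.
- exists (N - k)%Z => i iN; have := zx (i + k)%Z; rewrite /shift.
  by rewrite (_ : (i + k + - k)%Z = i); [apply; lia | lia].
Qed.

Section SlidingBlockCodes.
Variables (A B : Type) (X : shiftset A) (Y : shiftset B) (pi : config A -> config B).
Hypothesis sbc_pi : sliding_block_code X Y pi.

Lemma sliding_block_code_local : exists w : nat, forall x y, X x -> X y ->
  forall i, agree x y (i - Z.of_nat w) (i + Z.of_nat w) -> pi x i = pi y i.
Proof.
case: sbc_pi => _ [m [a [Phi defpi]]]; exists (m + a)%N => x y Xx Xy i xy.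
rewrite !defpi //; congr Phi; apply: eq_block => j hj; apply: xy; lia.
Qed.

Hypothesis shiftX : forall k x, X x -> X (shift k x).

Lemma sliding_block_code_shift k x : X x -> pi (shift k x) = shift k (pi x).
Proof.
case: sbc_pi => _ [m [a [Phi defpi]]] Xx; have Xkx := shiftX k Xx.
apply: functional_extensionality => i.
rewrite defpi // block_shift /shift defpi //; do 2 f_equal; lia.
Qed.

Hypothesis shiftY : forall k y, Y y -> Y (shift k y).

Lemma regular_point_shift k r :
  X r -> regular_point X Y pi r -> regular_point X Y pi (shift k r).
Proof.
move=> Xr reg_r y; rewrite sliding_block_code_shift // Uset_shift // reg_r.
split=> -[z [Uz pz]].
- exists (shift k z); rewrite Uset_shift // shiftK sliding_block_code_shift ?pz ?shiftNK //.
  by case: Uz.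
- have [Xz _] := Uz; move: Uz; rewrite Uset_shift // => Uz.
  by exists (shift (- k) z); rewrite sliding_block_code_shift ?pz.
Qed.

End SlidingBlockCodes.

Definition infinitely_often (P : nat -> Prop) : Prop :=
  forall M, exists2 D, (M <= D)%N & P D.

Lemma infinitely_often_pigeonhole (S : finType) (f : nat -> S) P :
  infinitely_often P -> exists s, infinitely_often (fun D => P D /\ f D = s).
Proof.
move=> ioP; apply: NNPP => none.
have [bound boundP] : exists bound : S -> nat,
    forall s D, (bound s <= D)%N -> ~ (P D /\ f D = s).
  apply: (choice (fun s M => forall D, (M <= D)%N -> ~ (P D /\ f D = s))) => s.
  apply: NNPP => unbounded; apply: none; exists s => M.
  apply: NNPP => noD; apply: unbounded; exists M => D MD PD.
  by apply: noD; exists D.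
have [D le_bound PD] := ioP (\max_(s : S) bound s).
apply: (boundP (f D) D) => //; apply: leq_trans le_bound.
exact: leq_bigmax.
Qed.

Section Compactness.
Variables (T : finType) (c : nat -> config T).

Definition pair_at (k : nat) (D : nat) : T * T :=
  (c D (Z.of_nat k), c D (- Z.of_nat k)%Z).

Definition frequent_pair (P : nat -> Prop) (k : nat) : T * T :=
  epsilon (inhabits (pair_at k 0))
    (fun s => infinitely_often (fun D => P D /\ pair_at k D = s)).

Fixpoint stage (k : nat) : nat -> Prop :=
  if k is k'.+1 then
    fun D => stage k' D /\ pair_at k' D = frequent_pair (stage k') k'
  else fun _ => True.

Definition cluster (i : Z) : T :=
  let s := frequent_pair (stage (Z.abs_nat i)) (Z.abs_nat i) in
  if (0 <=? i)%Z then s.1 else s.2.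

Lemma stage_infinitely_often k : infinitely_often (stage k).
Proof.
elim: k => [|k IHk] /=; first by move=> M; exists M.
apply: (epsilon_spec _ (fun s => infinitely_often (fun D => stage k D /\ pair_at k D = s))).
exact: infinitely_often_pigeonhole.
Qed.

Lemma stage_le k k' D : (k <= k')%N -> stage k' D -> stage k D.
Proof.
elim: k' => [|k' IHk']; first by rewrite leqn0 => /eqP ->.
by rewrite leq_eqVlt => /orP[/eqP -> // | ltkk'] [/(IHk' ltkk')].
Qed.

Lemma stage_cluster D i : stage (Z.abs_nat i).+1 D -> c D i = cluster i.
Proof.
move=> [_ pairD]; rewrite /cluster -pairD /pair_at.
by case: (Z.leb_spec 0 i) => i0 /=; f_equal; lia.
Qed.

Lemma cluster_point (N M : nat) :
  exists2 D, (M <= D)%N & agree (c D) cluster (- Z.of_nat N) (Z.of_nat N).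
Proof.
have [D MD stageD] := stage_infinitely_often N.+1 M.
exists D => // i iN; apply: stage_cluster.
by apply: stage_le stageD; lia.
Qed.

End Compactness.

Section RightClosing.
Variables (A B : finType) (X : shiftset A) (Y : shiftset B) (pi : config A -> config B).
Hypotheses (sftX : is_SFT X) (sbc_pi : sliding_block_code X Y pi)
  (rc_pi : right_closing X pi).

(* A limit of counterexamples with growing D would be two points, equal on
   the left, with equal images, that differ at 0. *)
Lemma right_closing_delay0 : exists D : nat, forall u v, X u -> X v ->
  agree u v (- Z.of_nat D) (-1) ->
  agree (pi u) (pi v) (- Z.of_nat D) (Z.of_nat D) -> u 0%Z = v 0%Z.
Proof.
have [w local_pi] := sliding_block_code_local sbc_pi.
pose bad (D : nat) (p : config A * config A) := [/\ X p.1, X p.2,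
  agree p.1 p.2 (- Z.of_nat D) (-1),
  agree (pi p.1) (pi p.2) (- Z.of_nat D) (Z.of_nat D) & p.1 0%Z <> p.2 0%Z].
apply: NNPP => no_delay.
have [p badp] : exists p : nat -> config A * config A, forall D, bad D (p D).
  apply: (choice bad) => D; apply: NNPP => no_bad; apply: no_delay.
  exists D => u v Xu Xv uv puv; apply: NNPP => uv0.
  by apply: no_bad; exists (u, v).
pose l := cluster (fun D i => ((p D).1 i, (p D).2 i)).
pose u i := (l i).1; pose v i := (l i).2.
have approx N M : exists2 D, (M <= D)%N &
    agree u (p D).1 (- Z.of_nat N) (Z.of_nat N) /\
    agree v (p D).2 (- Z.of_nat N) (Z.of_nat N).
  have [D MD pl] := cluster_point (fun D i => ((p D).1 i, (p D).2 i)) N M.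
  by exists D => //; split=> i /pl; rewrite /u /v /l => <-.
have Xu : X u.
  apply: (SFT_closed sftX) => N; have [D _ [pu _]] := approx N 0%N.
  by exists (p D).1 => //; case: (badp D).
have Xv : X v.
  apply: (SFT_closed sftX) => N; have [D _ [_ pv]] := approx N 0%N.
  by exists (p D).2 => //; case: (badp D).
have puv : pi u = pi v.
  apply: functional_extensionality => i.
  have [D iD [pu pv]] := approx (Z.abs_nat i + w)%N (Z.abs_nat i).
  have [Xp1 Xp2 _ ppi _] := badp D.
  have -> : pi u i = pi (p D).1 i by apply: local_pi => // j hj; apply: pu; lia.
  have -> : pi v i = pi (p D).2 i by apply: local_pi => // j hj; apply: pv; lia.
  by apply: ppi; lia.
have uv : u = v.
  apply: rc_pi => //; exists (-1)%Z => i i_neg.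
  have [D iD [pu pv]] := approx (Z.abs_nat i) (Z.abs_nat i).
  have [_ _ p12 _ _] := badp D.
  by rewrite pu ?pv ?p12 //; lia.
have [D _ [pu pv]] := approx 0%N 0%N.
have u0 : u 0%Z = (p D).1 0%Z by apply: pu; lia.
have v0 : v 0%Z = (p D).2 0%Z by apply: pv; lia.
by have [_ _ _ _] := badp D; rewrite -u0 -v0 uv.
Qed.

Lemma right_closing_delay : exists D : nat, forall u v j, X u -> X v ->
  agree u v (j - Z.of_nat D) (j - 1) ->
  agree (pi u) (pi v) (j - Z.of_nat D) (j + Z.of_nat D) -> u j = v j.
Proof.
have [D delay0] := right_closing_delay0.
exists D => u v j Xu Xv uv puv.
apply: (delay0 _ _ (SFT_shift sftX j Xu) (SFT_shift sftX j Xv)) => i hi.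
  by rewrite /shift; apply: uv; lia.
rewrite !(sliding_block_code_shift sbc_pi (SFT_shift sftX)) // /shift.
by apply: puv; lia.
Qed.

Lemma right_closing_agree_left : exists D : nat, forall u v q, X u -> X v ->
  (exists N, forall i, (i <= N)%Z -> u i = v i) ->
  (forall i, (i <= q)%Z -> pi u i = pi v i) ->
  forall i, (i <= q - Z.of_nat D)%Z -> u i = v i.
Proof.
have [D delay] := right_closing_delay.
exists D => u v q Xu Xv [N uvN] puv.
suff uv_upto k : forall i,
    (i <= N + Z.of_nat k)%Z -> (i <= q - Z.of_nat D)%Z -> u i = v i.
  by move=> i iq; apply: (uv_upto (Z.to_nat (i - N))) => //; lia.
elim: k => [|k IHk] i iNk iq; first by apply: uvN; lia.
have [ik|iN] := Z.le_gt_cases i (N + Z.of_nat k); first exact: IHk.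
by apply: delay => // j hj; [apply: IHk | apply: puv]; lia.
Qed.

End RightClosing.

Definition scons (B : Type) (b : B) (w : rseq B) : rseq B :=
  fun n => if n is k.+1 then w k else b.

Section Futures.
Variables (B : Type) (Y : shiftset B).

Lemma future_glue y w : future Y y w <-> Y (glue y w).
Proof.
split=> [[] // | Yyw]; split=> //; exists (glue y w); split=> // n.
rewrite /glue; case: Z.ltb_spec => [|_]; first lia.
by rewrite Nat2Z.id.
Qed.

Lemma glue_scons (y : config B) w :
  glue y (scons (y 0%Z) w) = shift (-1) (glue (shift 1 y) w).
Proof.
apply: functional_extensionality => i; rewrite /glue /shift.
case: (Z.ltb_spec i 0) => i0; case: (Z.ltb_spec (i + -1) 0) => i1 //; try lia.
- by rewrite /shift; f_equal; lia.
- by rewrite (_ : i = 0%Z) //; lia.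
- by rewrite (_ : Z.to_nat i = (Z.to_nat (i + -1)).+1) //; lia.
Qed.

Hypothesis shiftY : forall k y, Y y -> Y (shift k y).

Lemma future_shift1 y :
  future Y (shift 1 y) = fun w => future Y y (scons (y 0%Z) w).
Proof.
apply: functional_extensionality => w; apply: propositional_extensionality.
rewrite !future_glue glue_scons; split; first exact: shiftY.
by move=> /(shiftY 1); rewrite (shiftNK 1).
Qed.

Definition future_edge (y : config B) : Kedge B :=
  (future Y y, y 0%Z, future Y (shift 1 y)).

Lemma future_edge_Kedge y : Y y -> is_Kedge Y (future_edge y).
Proof.
move=> Yy; split; first by exists y.
split; last exact: future_shift1.
by exists (shift 1 y); split=> //; apply: shiftY.
Qed.

End Futures.

Section FuturesAtRegularPoints.
Variables (A B : finType) (X : shiftset A) (Y : shiftset B) (pi : config A -> config B).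
Hypotheses (sftX : is_SFT X) (sbc_pi : sliding_block_code X Y pi)
  (rc_pi : right_closing X pi).

(* Regularity at r lifts glue (pi r) w to some z left asymptotic to r; right
   closing forces z = r left of -D-1, so z may be spliced onto x there. *)
Lemma future_sub_of_regular : exists K : nat, forall r x, X r -> X x ->
  regular_point X Y pi r -> agree r x (- Z.of_nat K) (Z.of_nat K) ->
  forall w, future Y (pi r) w -> future Y (pi x) w.
Proof.
have [n splice_X] := SFT_splice sftX.
have [d local_pi] := sliding_block_code_local sbc_pi.
have [D agree_left] := right_closing_agree_left sftX sbc_pi rc_pi.
have [piY _] := sbc_pi.
exists (D + 1 + n + 2 * d)%N => r x Xr Xx reg_r rx w; rewrite !future_glue => Yrw.
have [z [[Xz asym_zr] pz]] : exists z, Uset X r z /\ pi z = glue (pi r) w.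
  apply/reg_r; split=> //; exists (-1)%Z => i i_neg.
  by rewrite /glue; case: Z.ltb_spec => //; lia.
pose p := (- Z.of_nat (D + 1))%Z.
have zr i : (i <= p)%Z -> z i = r i.
  move=> ip; apply: (agree_left z r (-1)%Z) => // [j j_neg|]; last lia.
  by rewrite pz /glue; case: Z.ltb_spec => //; lia.
have xz : agree x z (p - Z.of_nat (n + 2 * d)) p.
  by move=> i hi; rewrite zr ?(rx i) //; lia.
pose z' := splice p x z.
have z'x i : (i <= p)%Z -> z' i = x i.
  by rewrite /z' /splice; case: Z.leb_spec => //; lia.
have z'z i : (p - Z.of_nat (n + 2 * d) <= i)%Z -> z' i = z i.
  rewrite /z' /splice; case: Z.leb_spec => // ip ?; apply: xz; lia.
have Xz' : X z' by apply: splice_X => // i hi; apply: xz; lia.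
suff -> : glue (pi x) w = pi z' by apply: piY.
apply: functional_extensionality => i.
have [ileft | iright] := Z.le_gt_cases (i + Z.of_nat d) p.
- rewrite (local_pi z' x) // => [|j hj]; last by apply: z'x; lia.
  by rewrite /glue; case: Z.ltb_spec => //; lia.
- rewrite (local_pi z' z) // => [|j hj]; last by apply: z'z; lia.
  rewrite pz /glue; case: Z.ltb_spec => // i_neg.
  by symmetry; apply: local_pi => // j hj; apply: rx; lia.
Qed.

Lemma future_eq_of_regular : exists K : nat, forall r r', X r -> X r' ->
  regular_point X Y pi r -> regular_point X Y pi r' ->
  agree r r' (- Z.of_nat K) (Z.of_nat K) -> future Y (pi r) = future Y (pi r').
Proof.
have [K future_sub] := future_sub_of_regular.
exists K => r r' Xr Xr' reg_r reg_r' rr'.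
apply: functional_extensionality => w; apply: propositional_extensionality.
split; first exact: future_sub.
by apply: future_sub => // i /rr' ->.
Qed.

End FuturesAtRegularPoints.

Section FutureCoverMap.
Variables (A B : finType) (X : shiftset A) (Y : shiftset B) (pi : config A -> config B).
Variables (K d : nat) (e0 : Kedge B).
Hypotheses (shiftX : forall k x, X x -> X (shift k x))
  (shiftY : forall k y, Y y -> Y (shift k y))
  (sbc_pi : sliding_block_code X Y pi) (reg_pi : regular_code X Y pi).
Hypothesis local_pi : forall x y, X x -> X y ->
  forall i, agree x y (i - Z.of_nat d) (i + Z.of_nat d) -> pi x i = pi y i.
Hypothesis future_pi : forall r r', X r -> X r' ->
  regular_point X Y pi r -> regular_point X Y pi r' ->
  agree r r' (- Z.of_nat K) (Z.of_nat K) -> future Y (pi r) = future Y (pi r').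

(* N >= d yields the labels; N >= K + 1 makes the windows at i and i + 1
   overlap in a K-window. *)
Let N := (K + d + 1)%N.

Definition regular_with_window (s : seq A) (r : config A) : Prop :=
  [/\ X r, regular_point X Y pi r & block r (- Z.of_nat N) (N + N + 1) = s].

(* e0 is a junk value: by density every window of a point of X is the
   window of some regular point. *)
Definition window_edge (s : seq A) : Kedge B :=
  match excluded_middle_informative (exists r, regular_with_window s r) with
  | left ex_r => future_edge Y (pi (proj1_sig (constructive_indefinite_description _ ex_r)))
  | right _ => e0
  end.

Definition future_cover_map (x : config A) : config (Kedge B) :=
  fun i => window_edge (block x (i - Z.of_nat N) (N + N + 1)).

Lemma future_cover_mapP x i : X x -> exists r,
  [/\ X r, regular_point X Y pi r, agree r (shift i x) (- Z.of_nat N) (Z.of_nat N)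
    & future_cover_map x i = future_edge Y (pi r)].
Proof.
move=> Xx; have window_x : block x (i - Z.of_nat N) (N + N + 1) =
    block (shift i x) (- Z.of_nat N) (N + N + 1).
  by rewrite block_shift; f_equal; lia.
rewrite /future_cover_map /window_edge.
case: excluded_middle_informative => [ex_r | no_r].
  case: constructive_indefinite_description => r /= [Xr reg_r].
  rewrite window_x => /agree_block rx.
  by exists r; split=> // j hj; apply: rx; lia.
exfalso; apply: no_r.
have [r [Xr [reg_r rx]]] := reg_pi (shiftX i Xx) N.
exists r; split=> //; rewrite window_x; apply: eq_block => j hj.
by apply: rx; lia.
Qed.

Lemma LK_future_cover_map x : X x -> LK (future_cover_map x) = pi x.
Proof.
move=> Xx; apply: functional_extensionality => i; rewrite /LK.
have [r [Xr _ rx ->]] := future_cover_mapP i Xx.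
rewrite /Kedge_lab /= (local_pi Xr (shiftX i Xx)) => [|j hj]; last first.
  by apply: rx; lia.
by rewrite (sliding_block_code_shift sbc_pi shiftX).
Qed.

Lemma future_cover_map_XK x : X x -> XK Y (future_cover_map x).
Proof.
have [piY _] := sbc_pi.
move=> Xx i; have [r [Xr reg_r rx ->]] := future_cover_mapP i Xx.
have [r' [Xr' reg_r' r'x ->]] := future_cover_mapP (i + 1) Xx.
split; first exact: future_edge_Kedge (piY _ Xr).
rewrite /Kedge_tgt /Kedge_src /= -(sliding_block_code_shift sbc_pi shiftX) //.
have reg_r1 := regular_point_shift sbc_pi shiftX shiftY 1 Xr reg_r.
apply: (future_pi (shiftX 1 Xr) Xr' reg_r1 reg_r').
move=> j hj; rewrite /shift rx ?r'x; try lia.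
by rewrite /shift; f_equal; lia.
Qed.

Lemma future_cover_map_sbc : sliding_block_code X (XK Y) future_cover_map.
Proof.
split; first exact: future_cover_map_XK.
by exists N, N, window_edge.
Qed.

End FutureCoverMap.

Theorem proposition3p13 (A B : finType) (X : shiftset A) (Y : shiftset B)
    (pi : config A -> config B) :
  is_SFT X -> is_sofic Y ->
  factor_code X Y pi -> right_closing X pi -> regular_code X Y pi ->
  exists rho : config A -> config (Kedge B),
    sliding_block_code X (XK Y) rho /\
    forall x, X x -> LK (rho x) = pi x.
Proof.
move=> sftX soficY [sbc_pi _] rc_pi reg_pi.
have [K future_pi] := future_eq_of_regular sftX sbc_pi rc_pi.
have [d local_pi] := sliding_block_code_local sbc_pi.
have [_ [m [a [Phi _]]]] := sbc_pi.
(* Phi [::] only witnesses that B is inhabited. *)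
pose e0 := future_edge Y (fun _ => Phi [::]).
have shiftX := SFT_shift sftX; have shiftY := sofic_shift soficY.
exists (future_cover_map X Y pi K d e0); split.
- exact: future_cover_map_sbc.
- exact: LK_future_cover_map.
Qed.
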